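(* For every integer $n \geq 1$, the complete bipartite graphs $K_{2,n}$ and $K_{3,n}$ are stable, i.e., all roots of their independence polynomials lie in the closed left half-plane $\{z \in \mathbb{C} : \mathrm{Re}(z) \leq 0\}$.
   Context: For a simple graph $G$, the independence polynomial is $i(G,x)=\sum_{k=0}^{\alpha(G)} i_k(G)x^k$, where $i_k(G)$ is the number of independent sets of size $k$ in $G$ (with $i_0(G)=1$) and $\alpha(G)$ is the independence number. A graph $G$ is called stable if every root $z$ of $i(G,x)$ satisfies $\mathrm{Re}(z)\leq 0$. For the complete bipartite graph $K_{m,n}$ one has $i(K_{m,n},x)=(1+x)^n+(1+x)^m-1$. *)

From HB Require Import structures.
From mathcomp Require Import all_boot all_order all_algebra all_field.
Set Implicit Arguments. Unset Strict Implicit. Unset Printing Implicit Defensive.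
Import Order.TTheory GRing.Theory Num.Theory.
Local Open Scope ring_scope.

(* A simple graph on a finite vertex type T is given by an edge relation e
   (assumed symmetric and irreflexive where relevant). *)

Definition independent (T : finType) (e : rel T) (A : {set T}) : bool :=
  [forall x in A, forall y in A, ~~ e x y].

Definition indep_poly (T : finType) (e : rel T) : {poly algC} :=
  \sum_(A : {set T} | independent e A) 'X^#|A|.

Definition stable (T : finType) (e : rel T) : Prop :=
  forall z : algC, root (indep_poly e) z -> 'Re z <= 0.

Definition Kbip_edge (m n : nat) : rel ('I_m + 'I_n)%type :=
  fun x y =>
    match x, y with
    | inl _, inr _ => true
    | inr _, inl _ => true
    | _, _ => false
    end.
Arguments Kbip_edge m n : clear implicits.

(* If [z] is a root of [i(K_{m,n}, x) = (1+x)^m + (1+x)^n - 1] with [Re z > 0],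
   then [w = 1 + z] satisfies [w^a + w^(a+k) = 1] with [a = min(m, n) <= 3] and
   [Re w > 1].  For [k <= 1] both factors of [w^a (1 + w^k)] have modulus > 1.
   For [k >= 2], [v = 1/w] lies in the open disc [|v - 1/2| < 1/2] and
   [1 - v^a = -w^k], so [|v|^2 |1 - v^a| = |w|^(k-2) >= 1]; but on that disc
   [|v|^2 |1 - v^a| < 1] whenever [a <= 3].  This last estimate is a real
   polynomial inequality in [x = Re v] and [P = |v|^2], because
   [|1 - v^a|^2 = 1 - V_a(2x, P) + P^a] with [V_a] the Lucas sequence. *)

From mathcomp Require Import all_boot all_order all_algebra all_field.
From mathcomp Require Import ring lra.
Import Order.TTheory GRing.Theory Num.Theory.
Set Implicit Arguments. Unset Strict Implicit. Unset Printing Implicit Defensive.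
Local Open Scope ring_scope.

Section Lucas.
Variables (R : nzRingType) (s p : R).

Fixpoint lucasV k : R :=
  match k with
  | 0 => 2
  | 1 => s
  | (k'.+1 as k1).+1 => s * lucasV k1 - p * lucasV k'
  end.

Lemma lucasVSS k : lucasV k.+2 = s * lucasV k.+1 - p * lucasV k.
Proof. by []. Qed.

End Lucas.
Arguments lucasV {R}.

Lemma lucasV_exprD (R : comNzRingType) (u v : R) k :
  lucasV (u + v) (u * v) k = u ^+ k + v ^+ k.
Proof.
elim/ltn_ind: k => -[|[|k]] IH; rewrite ?expr1 //.
by rewrite lucasVSS !IH // !exprS; ring.
Qed.

Lemma rmorph_lucasV (R S : nzRingType) (f : {rmorphism R -> S}) s p k :
  f (lucasV s p k) = lucasV (f s) (f p) k.
Proof.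
elim/ltn_ind: k => -[|[|k]] IH; first exact: rmorph_nat; first by [].
by rewrite !lucasVSS rmorphB !rmorphM !IH.
Qed.

Lemma normr_one_sub_exprn (C : numClosedFieldType) (v : C) k :
  `|1 - v ^+ k| ^+ 2 = 1 - lucasV ('Re v *+ 2) (`|v| ^+ 2) k + (`|v| ^+ 2) ^+ k.
Proof.
have -> : 'Re v *+ 2 = v + v^* by rewrite ReE -mulr_natr mulfVK ?pnatr_eq0.
by rewrite !normCK rmorphB rmorph1 rmorphXn lucasV_exprD exprMn; ring.
Qed.

Lemma disc_cubic_bound (R : realFieldType) (x P : R) :
  x ^+ 2 <= P -> P < x -> P ^+ 2 * (1 - 8 * x ^+ 3 + 6 * x * P + P ^+ 3) < 1.
Proof.
move=> x2_le_P P_lt_x.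
have P_ge0 : 0 <= P by apply: le_trans x2_le_P; exact: sqr_ge0.
have [P_small|P_large] := ltP P (1 / 4).
  have x_small : x < 1 / 2 by nra.
  have : 1 - 8 * x ^+ 3 + 6 * x * P + P ^+ 3 <= 3 by nra.
  nra.
(* For [P >= 1/4], [x = P] is the worst case: [8 x^3 - 6 x P] increases on [x >= P]. *)
have cubic_ge : 8 * P ^+ 3 - 6 * P * P <= 8 * x ^+ 3 - 6 * x * P.
  rewrite -subr_ge0.
  have -> : 8 * x ^+ 3 - 6 * x * P - (8 * P ^+ 3 - 6 * P * P) =
            (x - P) * (8 * (x ^+ 2 + x * P + P ^+ 2) - 6 * P) by ring.
  apply: mulr_ge0; nra.
apply: (@le_lt_trans _ _ (P ^+ 2 * (1 + 6 * P ^+ 2 - 7 * P ^+ 3))).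
  by apply: ler_wpM2l; [exact: sqr_ge0 | lra].
have P_lt1 : P < 1 by nra.
have h1 : 0 <= (1 - P) * (P - 3 / 4) ^+ 2 by apply: mulr_ge0; [lra | exact: sqr_ge0].
have h2 : 0 <= P * (1 - P) * (P - 3 / 4) ^+ 2.
  by apply: mulr_ge0; [nra | exact: sqr_ge0].
have h3 : 0 <= P ^+ 2 * (1 - P) * (P - 3 / 4) ^+ 2.
  by apply: mulr_ge0; [apply: mulr_ge0; [exact: sqr_ge0 | lra] | exact: sqr_ge0].
nra.
Qed.

(* With [x = Re v] and [P = |v|^2], the hypotheses say that [v] lies in the
   open disc of diameter [[0, 1]], and the bracket is [|1 - v^k|^2]. *)
Lemma lucasV_disc_bound (R : realFieldType) (x P : R) k :
  x ^+ 2 <= P -> P < x -> (k <= 3)%N ->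
  P ^+ 2 * (1 - lucasV (x *+ 2) P k + P ^+ k) < 1.
Proof.
move=> x2_le_P P_lt_x.
have P_ge0 : 0 <= P by apply: le_trans x2_le_P; exact: sqr_ge0.
have x_gt0 : 0 < x by lra.
have x_lt1 : x < 1 by rewrite -(ltr_pM2l x_gt0) mulr1 -expr2; lra.
have P_lt1 : P < 1 by lra.
have P2_le1 : P ^+ 2 <= 1 by rewrite expr_le1 // ltW.
case: k => [|[|[|[|//]]]] _ /=; rewrite !mulr2n.
- by rewrite expr0 (_ : 1 - 2 + 1 = 0) ?mulr0 ?ltr01 //; ring.
- rewrite expr1; have Q_ge0 : 0 <= 1 - (x + x) + P by nra.
  by apply: le_lt_trans (ler_piMl Q_ge0 P2_le1) _; lra.
- have P2_le_x2 : P ^+ 2 <= x ^+ 2 by nra.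
  apply: (@le_lt_trans _ _ (P ^+ 2 * (1 + 2 * P - 3 * P ^+ 2))).
    by apply: ler_wpM2l; [exact: sqr_ge0 | nra].
  have P3_le_P : P ^+ 3 <= P.
    by rewrite -[leRHS]expr1; apply: ler_wiXn2l => //; exact: ltW.
  nra.
- rewrite (_ : 1 - _ + _ = 1 - 8 * x ^+ 3 + 6 * x * P + P ^+ 3); last by ring.
  exact: disc_cubic_bound.
Qed.

Lemma disc_normr_one_sub_exprn_lt1 (v : algC) k :
  `|v| ^+ 2 < 'Re v -> (k <= 3)%N -> `|v| ^+ 2 * `|1 - v ^+ k| < 1.
Proof.
move=> v_disc k_le3.
(* [algC] is only partially ordered: the real estimate is applied in its real
   subfield [algR]. *)
pose x := in_algR (Creal_Re v); pose P := in_algR (normr_real v) ^+ 2.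
have ltRE (a b : algR) : (a < b) = (val a < val b) by [].
have leRE (a b : algR) : (a <= b) = (val a <= val b) by [].
have valP : val P = `|v| ^+ 2 by rewrite rmorphXn.
have x2_le_P : x ^+ 2 <= P.
  by rewrite leRE rmorphXn valP normC2_Re_Im lerDl -real_normK ?exprn_ge0 ?Creal_Im.
have P_lt_x : P < x by rewrite ltRE valP.
have := lucasV_disc_bound x2_le_P P_lt_x k_le3.
rewrite ltRE rmorphM rmorphD rmorphB rmorph1 !rmorphXn rmorph_lucasV rmorphMn /=.
rewrite -expr2 -normr_one_sub_exprn -exprMn expr_lt1 //.
by rewrite mulr_ge0 ?exprn_ge0.
Qed.

Lemma exprD_neq1 (w : algC) (a b : nat) :
  1 < 'Re w -> (a <= 3)%N -> (a <= b)%N -> w ^+ a + w ^+ b != 1.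
Proof.
move=> Rew_gt1 a_le3 a_le_b.
have w_gt1 : 1 < `|w| := lt_le_trans Rew_gt1 (leif_Re_Creal w).1.
have w_gt0 : 0 < `|w| := lt_trans ltr01 w_gt1.
have w_neq0 : w != 0 by rewrite -normr_gt0.
rewrite -(subnKC a_le_b) exprD; move: (b - a)%N => k.
have [k_le1|k_ge2] := leqP k 1.
  have one_add_gt1 : 1 < `|1 + w ^+ k|.
    apply: lt_le_trans (leif_Re_Creal _).1.
    rewrite raddfD /= (Creal_ReP _ (rpred1 _)) ltrDl.
    case: k k_le1 => [|[|]] // _; last by rewrite expr1 (lt_trans ltr01).
    by rewrite expr0 (Creal_ReP _ (rpred1 _)) ltr01.
  have : 1 < `|w ^+ a * (1 + w ^+ k)|.
    rewrite normrM normrX (lt_le_trans one_add_gt1) // ler_peMl ?normr_ge0 //.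
    by rewrite exprn_ege1 // ltW.
  by rewrite mulrDr mulr1; apply: contraTneq => ->; rewrite normr1 ltxx.
apply/eqP => sum1.
set v := w^-1.
have v_disc : `|v| ^+ 2 < 'Re v.
  by rewrite ReV normfV exprVn -[X in X < _]mul1r ltr_pM2r ?invr_gt0 ?exprn_gt0.
have v_a : v ^+ a = 1 + w ^+ k.
  by rewrite -[v ^+ a]mulr1 -{1}sum1 mulrDr mulrA -exprMn mulVf // expr1n mul1r.
have := disc_normr_one_sub_exprn_lt1 v_disc a_le3.
rewrite v_a opprD addrA subrr add0r normrN normrX normfV exprVn mulrC.
rewrite ltr_pdivrMr ?exprn_gt0 // mul1r ltr_eXn2l //.
by rewrite ltnNge k_ge2.
Qed.

Lemma sum_powerset_exprn (R : comPzSemiRingType) (T : finType) (S : {set T}) (x : R) :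
  \sum_(A in powerset S) x ^+ #|A| = (1 + x) ^+ #|S|.
Proof.
rewrite -prodr_const [RHS]big_mkcond /=.
have -> : \prod_i (if i \in S then 1 + x else 1) = \prod_i ((if i \in S then x else 0) + 1).
  by apply: eq_bigr => i _; case: (i \in S); rewrite ?add0r // addrC.
rewrite bigA_distr big_mkcond /=; apply: eq_big => // A _; rewrite powersetE.
have [A_sub|/subsetPn[i Ai notSi]] := boolP (A \subset S); last first.
  by rewrite (bigD1 i) //= Ai (negbTE notSi) mul0r.
rewrite -prodr_const big_mkcond; apply: eq_bigr => i _.
by case: ifP => // /(subsetP A_sub) ->.
Qed.

Lemma sumr_setU (V : zmodType) (I : finType) (A B : {set I}) (F : I -> V) :
  \sum_(i in A :|: B) F i = \sum_(i in A) F i + \sum_(i in B) F i - \sum_(i in A :&: B) F i.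
Proof.
rewrite (big_setID A) setUK setDUl setDv set0U [\sum_(i in B) _](big_setID A) setIC.
by rewrite [X in _ + X - _]addrC addrA addrK.
Qed.

Section CompleteBipartiteGraph.
Variables (T : finType) (L : {set T}) (e : rel T).
Hypothesis eE : forall x y, e x y = ((x \in L) != (y \in L)).

Lemma independent_complete_bipartite A :
  independent e A = (A \subset L) || (A \subset ~: L).
Proof.
apply/idP/idP => [indA | /orP[] sub].
- apply/norP => -[/subsetPn[x Ax Lx] /subsetPn[y Ay]]; rewrite inE negbK => Ly.
  by move: indA => /forall_inP/(_ x Ax)/forall_inP/(_ y Ay); rewrite eE (negbTE Lx) Ly.
- apply/forall_inP => x Ax; apply/forall_inP => y Ay.
  by rewrite eE (subsetP sub x Ax) (subsetP sub y Ay).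
- apply/forall_inP => x Ax; apply/forall_inP => y Ay.
  by move: (subsetP sub x Ax) (subsetP sub y Ay); rewrite eE !inE => /negbTE-> /negbTE->.
Qed.

Lemma indep_poly_complete_bipartite :
  indep_poly e = (1 + 'X) ^+ #|L| + (1 + 'X) ^+ #|~: L| - 1.
Proof.
rewrite /indep_poly (eq_bigl [in powerset L :|: powerset (~: L)]); last first.
  by move=> A; rewrite !inE independent_complete_bipartite.
rewrite sumr_setU !sum_powerset_exprn -powersetI setICr powerset0 big_set1.
by rewrite cards0 expr0.
Qed.

End CompleteBipartiteGraph.

Lemma indep_poly_Kbip m n :
  indep_poly (Kbip_edge m n) = (1 + 'X) ^+ m + (1 + 'X) ^+ n - 1.
Proof.
pose L : {set 'I_m + 'I_n} := inl @: setT.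
have inlL i : inl i \in L by rewrite imset_f ?inE.
have inrL j : inr j \in L = false by apply/imsetP => -[].
have cardL : #|L| = m by rewrite card_imset ?cardsT ?card_ord //; exact: inl_inj.
have cardCL : #|~: L| = n by rewrite cardsCs setCK card_sum !card_ord cardL addKn.
rewrite (indep_poly_complete_bipartite (L := L)) ?cardL ?cardCL //.
by move=> [i|j] [i'|j']; rewrite /= ?inlL ?inrL.
Qed.

Lemma Kbip_stable m n : (minn m n <= 3)%N -> stable (Kbip_edge m n).
Proof.
move=> min_le3 z; rewrite /root indep_poly_Kbip !hornerE subr_eq0 => /eqP sum1.
rewrite real_leNgt ?Creal_Re ?rpred0 //; apply/negP => Rez_gt0.
have Rew_gt1 : 1 < 'Re (1 + z) by rewrite raddfD /= (Creal_ReP _ (rpred1 _)) ltrDl.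
have [m_le_n|n_lt_m] := leqP m n.
  move: min_le3; rewrite (minn_idPl m_le_n) => m_le3.
  by have /eqP := exprD_neq1 Rew_gt1 m_le3 m_le_n.
move: min_le3 sum1; rewrite (minn_idPr (ltnW n_lt_m)) addrC => n_le3.
by have /eqP := exprD_neq1 Rew_gt1 n_le3 (ltnW n_lt_m).
Qed.

Theorem theorem2 (n : nat) : (1 <= n)%N ->
  stable (Kbip_edge 2 n) /\ stable (Kbip_edge 3 n).
Proof. by move=> _; split; apply: Kbip_stable; apply: leq_trans (geq_minl _ _) _. Qed.
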